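(* Let $p\geq3$ be prime and $n\geq 2$. (1) If $1\leq i<p-1$, then $\Lambda_{i,n}^{p^{n-1}}-1=\sum_{l=1}^{i}\frac{(-1)^l}{[l!]}\zeta_{2(p-1)}^l p^{\frac{l}{p-1}}+O\left(p^{1+\frac{1}{p(p-1)}}\right)$. (2) If $i\geq p-1$, then $\Lambda_{i,n}^{p^{n-1}}-1=\sum_{l=1}^{p-1} \frac{(-1)^l}{[l!]}\zeta_{2(p-1)}^l p^{\frac{l}{p-1}}+\zeta_{2(p-1)}\, p^{1+\frac{1}{p-1}-\frac{1}{p^{i-p+2}}}+O\left(p^{1+\frac{1}{p-1}}\right)$.
   Context: $\mathbb{L}_p$ is the $p$-adic Mal'cev–Neumann field of formal sums $\sum_{x\in\mathbb{Q}}[\alpha_x]p^x$ ($\alpha_x\in\bar{\mathbb{F}}_p$, $[\cdot]$ Teichmüller lift, well-ordered support), valuation $v_p$ = minimum of support, $p^x$ the element with support $\{x\}$ and coefficient $1$; $\alpha=\beta+O(p^x)$ means $v_p(\alpha-\beta)\geq x$. $\zeta_{2(p-1)}$ is (the Teichmüller lift of) a fixed primitive $2(p-1)$-th root of unity in $\bar{\mathbb{F}}_p$; $[k!]$ is the Teichmüller lift of $k!\bmod p$. For $n\ge2$ define $\Lambda_{i,n}=\sum_{k=0}^i \frac{(-1)^{kn}}{[k!]}\zeta_{2(p-1)}^k p^{\frac{k}{p^{n-1}(p-1)}}$ for $0\leq i\leq p-1$, and $\Lambda_{i,n}=\Lambda_{p-1,n}+ \sum_{l=n}^{i-p+n}(-1)^n\zeta_{2(p-1)}\,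 p^{\frac{1}{p^{n-2}(p-1)}-\frac{1}{p^l}}$ for $i\geq p$. *)

From HB Require Import structures.
From mathcomp Require Import all_boot all_order all_algebra.
Set Implicit Arguments. Unset Strict Implicit. Unset Printing Implicit Defensive.
Import Order.TTheory GRing.Theory Num.Theory.
Local Open Scope ring_scope.

(* An abstract "p-adic Mal'cev-Neumann-type" valued field, recording exactly
   the structure of L_p used in the statement:
   - L       : the field (L_p),
   - F       : the coefficient field of characteristic p (playing bar F_p),
   - v       : the valuation v_p on nonzero elements (rational valued),
   - tm      : the Teichmuller lift [.] : F -> L,
   - pw x    : the element p^x (x : rat). *)
Record pMN (p : nat) := PMN {
  mnL : fieldType;
  mnF : fieldType;
  mn_char : p \in [pchar mnF];
  v : mnL -> rat;
  tm : mnF -> mnL;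
  pw : rat -> mnL;
  v_mul : forall x y : mnL, x != 0 -> y != 0 -> v (x * y) = v x + v y;
  v_add : forall x y : mnL, x != 0 -> y != 0 -> x + y != 0 ->
            Num.min (v x) (v y) <= v (x + y);
  pw_add : forall x y : rat, pw (x + y) = pw x * pw y;
  pw_1 : pw 1 = p%:R;
  pw_neq0 : forall x, pw x != 0;
  v_pw : forall x, v (pw x) = x;
  tm_mul : forall a b : mnF, tm (a * b) = tm a * tm b;
  tm_0 : tm 0 = 0;
  tm_1 : tm 1 = 1;
  tm_neq0 : forall a, a != 0 -> tm a != 0;
  v_tm : forall a, a != 0 -> v (tm a) = 0;
  tm_add : forall a b : mnF,
      tm (a + b) - (tm a + tm b) = 0 \/ 0 < v (tm (a + b) - (tm a + tm b))
}.

Section Defs.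
Variables (p : nat) (M : pMN p).
Local Notation L := (mnL M).

(* alpha = beta + O(p^c), i.e. v_p(alpha - beta) >= c *)
Definition bigOp (a b : L) (c : rat) : Prop :=
  a - b = 0 \/ c <= v (a - b).

Definition invtfact (k : nat) : L := (@tm _ M (k`!%:R))^-1.

Definition Lambda (z : mnF M) (n i : nat) : L :=
  let zt := @tm _ M z in
  let head := \sum_(0 <= k < (minn i (p - 1)).+1)
      (-1) ^+ (k * n) * invtfact k * zt ^+ k
      * @pw _ M ((k%:R : rat) / ((p ^ (n - 1) * (p - 1))%N%:R)) in
  if (i <= p - 1)%N then head
  else head + \sum_(n <= l < (i - p + n).+1)
      (-1) ^+ n * zt * @pw _ M (1 / ((p ^ (n - 2) * (p - 1))%N%:R) - 1 / ((p ^ l)%N%:R)).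

Definition mainSum (z : mnF M) (m : nat) : L :=
  \sum_(1 <= l < m.+1)
    (-1) ^+ l * invtfact l * (@tm _ M z) ^+ l * @pw _ M ((l%:R : rat) / ((p - 1)%N%:R)).
End Defs.

From mathcomp Require Import all_boot all_order all_algebra.
From mathcomp Require Import ring lra zify.
Import Order.TTheory GRing.Theory Num.Theory.
Local Open Scope ring_scope.
Set Implicit Arguments. Unset Strict Implicit. Unset Printing Implicit Defensive.

(* Write [Lambda_{i,n} = 1 + sum y] over monomials [y] of valuation at least
   [c = 1 / (p^(n-1) (p-1))].  Since [v p = 1], [(a + b)^p = a^p + b^p] modulo [p a b], so
   raising to the [p]-th power commutes with the sum up to an error of valuation [1 + c p^j]
   at the [j]-th step.  The Teichmuller coefficients are fixed by Frobenius and
   [zeta^(p^j) = (-1)^j zeta], so after [n - 1] steps the head of [Lambda] has become the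
   main sum, which gives (1).
   For (2) the last step is done to precision [1 + 1/(p-1)].  There the head is the truncated
   exponential [U] of [X = zeta p^(1/(p(p-1)))], and [(1 + U)^p = 1 + U^p + p X] up to that
   precision because [exp(X)^p = exp(p X)] in degrees [< p]; the remaining first-order terms
   [p X], [p W] and [W^p] ([W] the tail of [Lambda]) telescope to
   [zeta p^(1 + 1/(p-1) - 1/p^(i-p+2))]. *)

Section Valuation.
Variables (p : nat) (M : pMN p).
Local Notation L := (mnL M).

(* [vge c x] means [x \in p^c O]; [v] carries no information at [0]. *)
Definition vge (c : rat) (x : L) : Prop := x = 0 \/ c <= v x.

Definition vgt (c : rat) (x : L) : Prop := x = 0 \/ c < v x.

Lemma v1 : v (1 : L) = 0.
Proof.
have := v_mul (oner_neq0 L) (oner_neq0 L); rewrite mulr1 => h.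
by apply: (addrI (v (1 : L))); rewrite addr0 -h.
Qed.

Lemma vN (x : L) : x != 0 -> v (- x) = v x.
Proof.
have N1 : (-1 : L) != 0 by rewrite oppr_eq0 oner_neq0.
have vN1 : v (-1 : L) = 0.
  have := v_mul N1 N1; rewrite mulrNN mulr1 v1 => /eqP.
  by rewrite eq_sym -mulr2n mulrn_eq0 => /eqP.
by move=> x0; rewrite -mulN1r v_mul // vN1 add0r.
Qed.

Lemma vV (x : L) : x != 0 -> v x^-1 = - v x.
Proof.
move=> x0; have := v_mul x0 (invr_neq0 x0); rewrite mulfV // v1 => /eqP.
by rewrite eq_sym addrC addr_eq0 => /eqP.
Qed.

Lemma vge_le c c' x : c' <= c -> vge c x -> vge c' x.
Proof. by move=> le_c [->|h]; [left|right; apply: le_trans h]. Qed.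

Lemma vgeD c x y : vge c x -> vge c y -> vge c (x + y).
Proof.
move=> [->|hx]; first by rewrite add0r.
move=> [->|hy]; first by rewrite addr0; right.
have [->|x0] := eqVneq x 0; first by rewrite add0r; right.
have [->|y0] := eqVneq y 0; first by rewrite addr0; right.
have [|xy0] := eqVneq (x + y) 0; first by left.
by right; apply: le_trans (v_add x0 y0 xy0); rewrite le_min hx hy.
Qed.

Lemma vgeN c x : vge c x -> vge c (- x).
Proof.
have [->|x0] := eqVneq x 0; first by rewrite oppr0; left.
by move=> [/eqP|h]; [rewrite (negbTE x0)|right; rewrite vN].
Qed.

Lemma vgeB c x y : vge c x -> vge c y -> vge c (x - y).
Proof. by move=> hx /vgeN; apply: vgeD. Qed.

Lemma vgeM a b x y : vge a x -> vge b y -> vge (a + b) (x * y).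
Proof.
have [->|x0] := eqVneq x 0; first by rewrite mul0r; left.
have [->|y0] := eqVneq y 0; first by rewrite mulr0; left.
move=> [/eqP|hx]; first by rewrite (negbTE x0).
move=> [/eqP|hy]; first by rewrite (negbTE y0).
by right; rewrite v_mul // lerD.
Qed.

Lemma vge_sum (I : Type) (r : seq I) (P : pred I) (F : I -> L) c :
  (forall i, P i -> vge c (F i)) -> vge c (\sum_(i <- r | P i) F i).
Proof.
by move=> h; elim/big_rec: _ => [|i s Pi hs]; [left|apply: vgeD => //; apply: h].
Qed.

Lemma vgeMn c x k : vge c x -> vge c (x *+ k).
Proof. by move=> h; rewrite -[k]subn0 -sumr_const_nat; apply: vge_sum. Qed.

Lemma vge1 : vge 0 (1 : L).
Proof. by right; rewrite v1. Qed.

Lemma vge_nat k : vge 0 (k%:R : L).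
Proof. exact: vgeMn vge1. Qed.

Lemma vgeX a x k : vge a x -> vge (a * k%:R) (x ^+ k).
Proof.
move=> h; elim: k => [|k ih]; first by rewrite mulr0 expr0; exact: vge1.
by rewrite exprS mulrSr mulrDr mulr1 addrC; apply: vgeM.
Qed.

Lemma vge_expr1D_sub1 (U : L) c k : 0 <= c -> vge c U -> vge c ((1 + U) ^+ k - 1).
Proof.
move=> c0 hU; elim: k => [|k ih]; first by rewrite expr0 subrr; left.
have -> : (1 + U) ^+ k.+1 - 1 = ((1 + U) ^+ k - 1) * (1 + U) + U by rewrite exprSr; ring.
apply: vgeD => //; rewrite -[c]addr0; apply: vgeM => //.
by rewrite -[0]addr0; apply: vgeD; [exact: vge1|exact: vge_le hU].
Qed.

Lemma pw0 : @pw _ M 0 = 1.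
Proof.
apply: (mulfI (pw_neq0 M 0)); by rewrite -pw_add addr0 mulr1.
Qed.

Lemma pwX q k : @pw _ M q ^+ k = @pw _ M (q * k%:R).
Proof.
elim: k => [|k ih]; first by rewrite expr0 mulr0 pw0.
by rewrite exprS ih -pw_add mulrSr mulrDr mulr1 addrC.
Qed.

Lemma vge_pw q : vge q (@pw _ M q).
Proof. by right; rewrite v_pw. Qed.

Lemma vgtD c x y : vgt c x -> vgt c y -> vgt c (x + y).
Proof.
move=> [->|hx]; first by rewrite add0r.
move=> [->|hy]; first by rewrite addr0; right.
have [->|x0] := eqVneq x 0; first by rewrite add0r; right.
have [->|y0] := eqVneq y 0; first by rewrite addr0; right.
have [|xy0] := eqVneq (x + y) 0; first by left.
by right; apply: lt_le_trans (v_add x0 y0 xy0); rewrite lt_min hx hy.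
Qed.

End Valuation.

Section Frobenius.
Variables (p : nat) (M : pMN p).
Hypothesis p_prime : prime p.
Local Notation L := (mnL M).

Definition binom_mid (R : comPzRingType) (x y : R) (lo : nat) : R :=
  \sum_(lo <= k < p) x ^+ (p - k) * y ^+ k *+ 'C(p, k).

Lemma exprp_binom_mid (R : comPzRingType) (x y : R) :
  (x + y) ^+ p = x ^+ p + y ^+ p + binom_mid x y 1.
Proof.
rewrite exprDn -(big_mkord xpredT (fun k => x ^+ (p - k) * y ^+ k *+ 'C(p, k))).
rewrite big_nat_recr //= big_ltn ?prime_gt0 // /binom_mid.
by rewrite subn0 subnn bin0 binn expr0 mulr1 mul1r !mulr1n; ring.
Qed.

Lemma exprp_binom_mid2 (x y : L) :
  (x + y) ^+ p = x ^+ p + y ^+ p + x ^+ (p - 1) * y *+ p + binom_mid x y 2.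
Proof.
by rewrite exprp_binom_mid /binom_mid big_ltn ?prime_gt1 // expr1 bin1 addrA.
Qed.

Lemma vge_p : vge 1 (p%:R : L).
Proof. by rewrite -pw_1; exact: vge_pw. Qed.

Lemma vge_binomial k : (0 < k < p)%N -> vge 1 ('C(p, k)%:R : L).
Proof.
move=> /(prime_dvd_bin p_prime) /divnK <-; rewrite natrM -[1]add0r.
by apply: vgeM; [exact: vge_nat|exact: vge_p].
Qed.

Lemma vge_binom_mid (x y : L) a b B lo : (0 < lo)%N -> vge a x -> vge b y ->
    (forall k, (lo <= k < p)%N -> B <= a * (p - k)%:R + b * k%:R) ->
  vge (1 + B) (binom_mid x y lo).
Proof.
move=> lo_gt0 hx hy hB; rewrite /binom_mid big_nat_cond; apply: vge_sum => k.
case/andP=> /andP[lo_k k_p] _; apply: (@vge_le _ _ (1 + (a * (p - k)%:R + b * k%:R))).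
  by rewrite lerD2l hB // lo_k.
rewrite -[_ *+ 'C(p, k)]mulr_natl; apply: vgeM; last by apply: vgeM; apply: vgeX.
by apply: vge_binomial; rewrite k_p (leq_trans lo_gt0).
Qed.

Lemma vge_frobeniusD (x y : L) c : 0 <= c -> vge c x -> vge c y ->
  vge (1 + c * p%:R) ((x + y) ^+ p - x ^+ p - y ^+ p).
Proof.
move=> c0 hx hy.
have -> : (x + y) ^+ p - x ^+ p - y ^+ p = binom_mid x y 1
  by rewrite exprp_binom_mid; ring.
apply: vge_binom_mid hx hy _ => // k /andP[_ /ltnW k_p].
by rewrite -mulrDr -natrD subnK.
Qed.

Lemma vge_frobenius_sum (I : Type) (r : seq I) (P : pred I) (F : I -> L) c :
    0 <= c -> (forall i, P i -> vge c (F i)) ->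
  vge (1 + c * p%:R) ((\sum_(i <- r | P i) F i) ^+ p - \sum_(i <- r | P i) F i ^+ p).
Proof.
move=> c0 hF; elim: r => [|i r ih].
  by rewrite !big_nil expr0n gtn_eqF ?prime_gt0 // subrr; left.
rewrite !big_cons; case: ifP => // Pi.
set s := \sum_(j <- r | P j) F j; set sp := \sum_(j <- r | P j) F j ^+ p.
have -> : (F i + s) ^+ p - (F i ^+ p + sp) =
    ((F i + s) ^+ p - F i ^+ p - s ^+ p) + (s ^+ p - sp) by ring.
by apply: vgeD => //; apply: vge_frobeniusD => //; [exact: hF|exact: vge_sum].
Qed.

Lemma vge_exprp_perturb (A E : L) e B : 0 <= e -> vge 0 A -> vge e E ->
  B <= e * p%:R -> B <= 1 + e -> vge B ((A + E) ^+ p - A ^+ p).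
Proof.
move=> e0 hA hE Bp Be.
have -> : (A + E) ^+ p - A ^+ p = E ^+ p + binom_mid A E 1
  by rewrite exprp_binom_mid; ring.
apply: vgeD; first by apply: vge_le Bp _; apply: vgeX.
apply: vge_le Be _; apply: vge_binom_mid hA hE _ => // k /andP[k1 _].
by rewrite mul0r add0r ler_peMr // ler1n.
Qed.

End Frobenius.

Section Teichmuller.
Variables (p : nat) (M : pMN p).
Hypothesis p_prime : prime p.
Local Notation L := (mnL M).
Local Notation F := (mnF M).
Local Notation tm := (@tm _ M).

Lemma tmX (a : F) k : tm (a ^+ k) = tm a ^+ k.
Proof.
by elim: k => [|k ih]; [rewrite !expr0 tm_1|rewrite !exprS tm_mul ih].
Qed.

Lemma vgt0_tm_natr_sub k : vgt 0 (tm k%:R - (k%:R : L)).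
Proof.
elim: k => [|k ih]; first by rewrite tm_0 subrr; left.
have -> : tm k.+1%:R - (k.+1%:R : L) =
    (tm (k%:R + 1) - (tm k%:R + tm 1)) + (tm k%:R - k%:R).
  by rewrite tm_1 -!natr1; ring.
by apply: vgtD => //; have [->|] := tm_add (k%:R : F) 1; [left|right].
Qed.

Lemma natr_neq0_v0 k : ~~ (p %| k)%N -> (k%:R : L) != 0 /\ v (k%:R : L) = 0.
Proof.
rewrite (dvdn_pcharf (mn_char M)) => kF.
have t0 := tm_neq0 kF; have vt := v_tm kF.
have tm_vgt0 x : vgt 0 x -> tm k%:R != x.
  by apply: contraPneq => <- [/eqP|]; [rewrite (negbTE t0)|rewrite vt ltxx].
have k0 : (k%:R : L) != 0.
  by apply: contraNneq (tm_vgt0 _ (vgt0_tm_natr_sub k)) => ->; rewrite subr0.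
split=> //; case: (vge_nat M k) => [/eqP|vk]; first by rewrite (negbTE k0).
apply/eqP; rewrite eq_le vk andbT leNgt; apply/negP => hk.
suff : tm k%:R != tm k%:R by rewrite eqxx.
apply: tm_vgt0; rewrite -(subrK (k%:R : L) (tm k%:R)).
by apply: vgtD; [exact: vgt0_tm_natr_sub|right].
Qed.

Lemma vge_natrXp_sub m : vge 1 ((m%:R : L) ^+ p - m%:R).
Proof.
elim: m => [|m ih]; first by rewrite expr0n gtn_eqF ?prime_gt0 // subrr; left.
have -> : (m.+1%:R : L) ^+ p - m.+1%:R =
    ((m%:R : L) ^+ p - m%:R) + binom_mid p (m%:R : L) 1 1.
  by rewrite -natr1 exprp_binom_mid // expr1n; ring.
apply: vgeD => //; rewrite -[1]addr0.
apply: (vge_binom_mid p_prime (a := 0) (b := 0)) => //; first exact: vge_nat.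
- exact: vge1.
- by move=> k _; rewrite !mul0r addr0.
Qed.

Lemma tm_natrXp m : tm m%:R ^+ p = tm m%:R.
Proof. by rewrite -tmX; congr tm; exact: (pFrobenius_aut_nat (mn_char M)). Qed.

(* [d = tm m - m] has positive valuation and satisfies [d = (m^p - m) + d^p + ...],
   which forces [v d >= min(1, p v d)], hence [v d >= 1]. *)
Lemma vge_tm_natr_sub m : vge 1 (tm m%:R - (m%:R : L)).
Proof.
set d := tm m%:R - (m%:R : L).
have [d0|d0] := eqVneq d 0; first by left.
case: (vgt0_tm_natr_sub m) => [/eqP|vd]; first by rewrite -/d (negbTE d0).
have [|vd1] := lerP 1 (v d); first by right.
have hd : d = ((m%:R : L) ^+ p - m%:R) + d ^+ p + binom_mid p (m%:R : L) d 1.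
  have e : ((m%:R : L) + d) ^+ p = m%:R + d by rewrite /d addrC subrK tm_natrXp.
  by rewrite exprp_binom_mid // in e; apply: (addrI (m%:R : L)); rewrite -e; ring.
have : vge (Num.min 1 (v d * p%:R)) d.
  rewrite [X in vge _ X]hd; apply: vgeD; first apply: vgeD.
  - by apply: vge_le (vge_natrXp_sub m); rewrite ge_min lexx.
  - have vge_d : vge (v d) d by right.
    by apply: vge_le (vgeX p vge_d); rewrite ge_min orbC lexx.
  - apply: (@vge_le _ _ (1 + 0)); first by rewrite addr0 ge_min lexx.
    apply: (vge_binom_mid p_prime (a := 0) (b := v d)) => //; first exact: vge_nat.
    + by right.
    + by move=> k _; rewrite mul0r add0r mulr_ge0 // ltW.
case=> [/eqP|]; first by rewrite (negbTE d0).
rewrite ge_min leNgt vd1 /= leNgt ltr_pMr // ltr1n prime_gt1 //.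
Qed.

Lemma fact_ndvd k : (k < p)%N -> ~~ (p %| k`!)%N.
Proof.
elim: k => [|k ih] lt_k_p; first by rewrite fact0 dvdn1 gtn_eqF ?prime_gt1.
rewrite factS Euclid_dvdM // negb_or ih ?(ltn_trans _ lt_k_p) // andbT.
by apply: contraTN lt_k_p => /(dvdn_leq (ltn0Sn k)); rewrite leqNgt.
Qed.

Lemma factF_neq0 k : (k < p)%N -> (k`!%:R : F) != 0.
Proof. by move=> lt_k_p; rewrite -(dvdn_pcharf (mn_char M)) fact_ndvd. Qed.

Lemma invtfact0 : invtfact M 0 = 1.
Proof. by rewrite /invtfact fact0 tm_1 invr1. Qed.

Lemma invtfactXp k : invtfact M k ^+ p = invtfact M k.
Proof. by rewrite /invtfact exprVn tm_natrXp. Qed.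

Lemma invtfactXpn k j : invtfact M k ^+ (p ^ j) = invtfact M k.
Proof. by elim: j => [|j ih]; rewrite ?expr1 // expnSr exprM ih invtfactXp. Qed.

Lemma vge_invtfact k : (k < p)%N -> vge 0 (invtfact M k).
Proof.
move=> /factF_neq0 kF; right.
by rewrite /invtfact vV ?tm_neq0 // v_tm // oppr0.
Qed.

Lemma fact_neq0 k : (k < p)%N -> (k`!%:R : L) != 0.
Proof. by move=> /fact_ndvd /natr_neq0_v0 []. Qed.

Lemma vge_inv_fact k : (k < p)%N -> vge 0 (k`!%:R : L)^-1.
Proof.
move=> /fact_ndvd /natr_neq0_v0 [k0 vk]; right.
by rewrite vV // vk oppr0.
Qed.

Lemma vge_invtfact_sub k : (k < p)%N -> vge 1 (invtfact M k - (k`!%:R : L)^-1).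
Proof.
move=> lt_k_p; have t0 := tm_neq0 (factF_neq0 lt_k_p).
have k0 := fact_neq0 lt_k_p.
have -> : invtfact M k - (k`!%:R : L)^-1 =
    (k`!%:R - tm k`!%:R) * (invtfact M k * (k`!%:R : L)^-1).
  by rewrite /invtfact; field; rewrite t0 k0.
rewrite -[1]addr0 -opprB; apply: vgeM; first exact/vgeN/vge_tm_natr_sub.
by rewrite -[0]addr0; apply: vgeM; [exact: vge_invtfact|exact: vge_inv_fact].
Qed.

Lemma tmN1 : (2 < p)%N -> tm (-1) = -1.
Proof.
move=> p_gt2; have : tm (-1) ^+ 2 == 1 by rewrite -tmX sqrrN expr1n tm_1.
rewrite sqrf_eq1 => /orP[/eqP t1|/eqP //]; exfalso.
have [two0 v2] : (2%:R : L) != 0 /\ v (2%:R : L) = 0.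
  by apply: natr_neq0_v0; apply: contraTN p_gt2 => /(dvdn_leq (ltn0Sn 1)); rewrite -leqNgt.
have := tm_add (1 : F) (-1); rewrite subrr tm_0 tm_1 t1 sub0r.
case=> [/eqP|]; first by rewrite oppr_eq0 (negbTE two0).
by rewrite vN // v2 ltxx.
Qed.

End Teichmuller.

Lemma coef_expr_lt (R : nzRingType) (P : {poly R}) k d :
  P`_0 = 0 -> (d < k)%N -> (P ^+ k)`_d = 0.
Proof.
move=> P0; elim: k d => [|k ih] d // lt_d_k; rewrite exprSr coefM.
apply: big1 => -[j /= lt_j_d] _; have [lt_j_k|le_k_j] := ltnP j k.
  by rewrite ih // mul0r.
have -> : j = d by lia.
by rewrite subnn P0 mulr0.
Qed.

Section TruncatedExp.
Variables (p : nat) (M : pMN p).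
Hypothesis p_prime : prime p.
Local Notation L := (mnL M).

Definition exp_trunc (X : L) : L := \sum_(1 <= k < p) (k`!%:R)^-1 * X ^+ k.

Definition exp_trunc_tm (X : L) : L := \sum_(1 <= k < p) invtfact M k * X ^+ k.

Definition exp_poly : {poly L} := \poly_(k < p) (k`!%:R)^-1.

Lemma vge_coef_expr (P : {poly L}) k :
  (forall d, vge 0 P`_d) -> forall d, vge 0 (P ^+ k)`_d.
Proof.
move=> hP; elim: k => [|k ih] d; first by rewrite expr0 coef1; exact: vge_nat.
rewrite exprS coefM; apply: vge_sum => j _.
by rewrite -[0]addr0; apply: vgeM.
Qed.

Lemma coef_exp_poly k : exp_poly`_k = if (k < p)%N then (k`!%:R)^-1 else 0.
Proof. by rewrite coef_poly. Qed.

Lemma vge_coef_exp_poly_sub1 d : vge 0 (exp_poly - 1)`_d.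
Proof.
rewrite coefB coef_exp_poly coef1; apply: vgeB; last exact: vge_nat.
by case: ifP => [/(vge_inv_fact M p_prime)|_] //; left.
Qed.

Lemma horner_exp_poly X : exp_poly.[X] = 1 + exp_trunc X.
Proof.
rewrite horner_poly -(big_mkord xpredT (fun k => (k`!%:R)^-1 * X ^+ k)).
by rewrite big_ltn ?prime_gt0 // fact0 invr1 mulr1.
Qed.

Lemma deriv_exp_poly : exp_poly^`() = exp_poly - (p.-1`!%:R)^-1 *: 'X^(p.-1).
Proof.
apply/polyP => k; rewrite coef_deriv coefB coefZ coefXn !coef_exp_poly.
have [lt_k1_p|le_p_k1] := ltnP k.+1 p.
  rewrite ltnW // ltn_eqF ?ltn_predRL //= mulr0 subr0.
  have := fact_neq0 M p_prime lt_k1_p; rewrite factS natrM mulf_eq0 negb_or.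
  by case/andP=> k1_0 k0; field; rewrite k0 addrC natr1 k1_0.
rewrite mul0rn; have [->|ne_k] := eqVneq k p.-1.
  by rewrite ltn_predL prime_gt0 // mulr1 subrr.
by rewrite ifF ?mulr0 ?subrr //; apply/negbTE; lia.
Qed.

(* [exp_poly] solves [E' = E] up to degree [p - 1], so [(E ^+ p)' = p E ^+ p] up to
   degree [p - 2], which determines the low coefficients of [E ^+ p]. *)
Lemma coef_exp_polyXp d : (d < p)%N -> (exp_poly ^+ p)`_d * d`!%:R = p%:R ^+ d.
Proof.
have p_eq : p = p.-1.+1 by rewrite prednK // prime_gt0.
have dE : (exp_poly ^+ p)^`() =
    (exp_poly ^+ p - (p.-1`!%:R)^-1 *: ('X^(p.-1) * exp_poly ^+ p.-1)) *+ p.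
  by rewrite deriv_exp deriv_exp_poly mulrBl -scalerAl -exprS -p_eq.
elim: d => [|d ih] lt_d_p.
  rewrite fact0 mulr1 expr0 -horner_coef0 horner_exp horner_coef0.
  by rewrite coef_exp_poly prime_gt0 // fact0 invr1 expr1n.
have := congr1 (fun P : {poly L} => P`_d) dE.
rewrite coef_deriv coefMn coefB coefZ coefXnM -ltnS -p_eq lt_d_p mulr0 subr0.
move=> e; have {}e : (exp_poly ^+ p)`_d.+1 * d.+1%:R = (exp_poly ^+ p)`_d * p%:R.
  by rewrite !mulr_natr.
by rewrite factS natrM mulrA e -mulrA [p%:R * _]mulrC mulrA ih ?exprSr // ltnW.
Qed.

Definition exp_defect : {poly L} :=
  exp_poly ^+ p - (exp_poly - 1) ^+ p - 1 - p%:R *: 'X.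

Lemma coef_exp_defect_lt d : (d < p)%N ->
  exp_defect`_d = if (d <= 1)%N then 0 else p%:R ^+ d / d`!%:R.
Proof.
move=> lt_d_p; have low : ((exp_poly - 1) ^+ p)`_d = 0.
  apply: coef_expr_lt lt_d_p.
  by rewrite coefB coef_exp_poly prime_gt0 // fact0 invr1 coef1 subrr.
rewrite /exp_defect !coefB coefZ coefX coef1 {}low.
have d0 := fact_neq0 M p_prime lt_d_p.
rewrite -(coef_exp_polyXp lt_d_p) mulfK // subr0.
case: d lt_d_p d0 => [|[|d]] _ /= d0.
- have := coef_exp_polyXp (prime_gt0 p_prime); rewrite fact0 mulr1 expr0 => ->.
  by rewrite subrr mulr0 subr0.
- have := coef_exp_polyXp (prime_gt1 p_prime); rewrite mulr1 expr1 => ->.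
  by rewrite subr0 mulr1 subrr.
- by rewrite mulr0 !subr0.
Qed.

Lemma vge_coef_exp_defect d : vge 1 exp_defect`_d.
Proof.
have -> : exp_defect = binom_mid p 1 (exp_poly - 1) 1 - p%:R *: 'X.
  have := exprp_binom_mid p_prime 1 (exp_poly - 1); rewrite addrC subrK expr1n.
  by rewrite /exp_defect => ->; ring.
rewrite coefB coefZ coef_sum; apply: vgeB; last first.
  by rewrite -[1]addr0; apply: vgeM; [exact: vge_p|rewrite coefX; exact: vge_nat].
rewrite big_nat_cond; apply: vge_sum => k /andP[lt_k _].
rewrite expr1n mul1r coefMn -mulr_natl -[1]addr0; apply: vgeM.
  exact: vge_binomial.
exact: vge_coef_expr vge_coef_exp_poly_sub1 d.
Qed.

Lemma horner_exp_defect X :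
  exp_defect.[X] = (1 + exp_trunc X) ^+ p - 1 - exp_trunc X ^+ p - p%:R * X.
Proof.
rewrite /exp_defect !hornerE horner_exp_poly [1 + exp_trunc X - 1]addrC addKr.
by rewrite [_ - exp_trunc X ^+ p - 1]addrAC.
Qed.

Lemma vge_exp_trunc X c : 0 <= c -> vge c X -> vge c (exp_trunc X).
Proof.
move=> c0 hX; rewrite /exp_trunc big_nat_cond; apply: vge_sum => k /andP[/andP[k1 kp] _].
apply: (@vge_le _ _ (0 + c * k%:R)); first by rewrite add0r ler_peMr // ler1n.
by apply: vgeM; [exact: vge_inv_fact|exact: vgeX].
Qed.

Lemma vge_exp_truncXp X c : 0 <= c -> c * p%:R <= 1 -> vge c X ->
  vge (1 + c * p%:R) ((1 + exp_trunc X) ^+ p - 1 - exp_trunc X ^+ p - p%:R * X).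
Proof.
move=> c0 cp1 hX; rewrite -horner_exp_defect horner_coef; apply: vge_sum => -[d _] _ /=.
have [lt_d_p|le_p_d] := ltnP d p; last first.
  apply: (@vge_le _ _ (1 + c * d%:R)); first by rewrite lerD2l ler_wpM2l // ler_nat.
  by apply: vgeM; [exact: vge_coef_exp_defect|exact: vgeX].
rewrite coef_exp_defect_lt //; case: leqP => [_|d_gt1]; first by rewrite mul0r; left.
apply: (@vge_le _ _ (1 * d%:R + 0 + c * d%:R)).
  have : 2%:R <= d%:R :> rat by rewrite ler_nat.
  have : 0 <= c * d%:R by rewrite mulr_ge0.
  lra.
apply: vgeM; last exact: vgeX.
by apply: vgeM; [exact/vgeX/vge_p|exact: vge_inv_fact].
Qed.

Lemma vge_invtfact_expr X c k : 0 <= c -> vge c X -> (0 < k < p)%N ->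
  vge c (invtfact M k * X ^+ k).
Proof.
move=> c0 hX /andP[k1 kp].
apply: (@vge_le _ _ (0 + c * k%:R)); first by rewrite add0r ler_peMr // ler1n.
by apply: vgeM; [exact: vge_invtfact|exact: vgeX].
Qed.

Lemma vge_exp_trunc_tm X c : 0 <= c -> vge c X -> vge c (exp_trunc_tm X).
Proof.
move=> c0 hX; rewrite /exp_trunc_tm big_nat.
by apply: vge_sum => k; exact: vge_invtfact_expr.
Qed.

Lemma vge_exp_trunc_tm_sub X c : 0 <= c -> vge c X ->
  vge (1 + c) (exp_trunc_tm X - exp_trunc X).
Proof.
move=> c0 hX; rewrite -sumrB big_nat_cond; apply: vge_sum => k /andP[/andP[k1 kp] _].
rewrite -mulrBl; apply: (@vge_le _ _ (1 + c * k%:R)).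
  by rewrite lerD2l ler_peMr // ler1n.
by apply: vgeM; [exact: vge_invtfact_sub|exact: vgeX].
Qed.

Lemma vge_exp_trunc_tmXp X c : 0 <= c -> c * p%:R <= 1 -> vge c X ->
  vge (1 + c * p%:R)
      ((1 + exp_trunc_tm X) ^+ p - 1 - exp_trunc_tm X ^+ p - p%:R * X).
Proof.
move=> c0 cp1 hX; set U := exp_trunc X; set D := exp_trunc_tm X - U.
have hD : vge (1 + c) D by exact: vge_exp_trunc_tm_sub.
have hU : vge 0 U by apply: vge_le (vge_exp_trunc c0 hX).
have p1 : 1 <= p%:R :> rat by rewrite ler1n prime_gt0.
have perturb A : vge 0 A -> vge (1 + c * p%:R) ((A + D) ^+ p - A ^+ p).
  move=> hA; apply: (vge_exprp_perturb p_prime (e := 1 + c)) => //; [lra|nra|lra].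
have -> : exp_trunc_tm X = U + D by rewrite /D addrC subrK.
have -> : (1 + (U + D)) ^+ p - 1 - (U + D) ^+ p - p%:R * X =
    ((1 + U) ^+ p - 1 - U ^+ p - p%:R * X) + (((1 + U) + D) ^+ p - (1 + U) ^+ p)
    - ((U + D) ^+ p - U ^+ p).
  by rewrite addrA; ring.
apply: vgeB; last exact: perturb.
apply: vgeD; first exact: vge_exp_truncXp.
by apply: perturb; rewrite -[0]addr0; apply: vgeD; [exact: vge1|].
Qed.

End TruncatedExp.

Section IteratedFrobenius.
Variables (p : nat) (M : pMN p).
Hypothesis p_prime : prime p.
Local Notation L := (mnL M).

Definition frobenius_defect (ys : seq L) j : L :=
  (1 + \sum_(y <- ys) y) ^+ (p ^ j) - 1 - \sum_(y <- ys) y ^+ (p ^ j).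

Variables (ys : seq L) (c : rat).
Hypotheses (c_ge0 : 0 <= c) (vge_ys : forall y, y \in ys -> vge c y).

Local Notation S j := (\sum_(y <- ys) y ^+ (p ^ j)).
Local Notation E := (frobenius_defect ys).

Lemma vge_sum_exprpX j : vge (c * (p ^ j)%:R) (S j).
Proof.
by rewrite big_seq; apply: vge_sum => y /vge_ys hy; exact: vgeX.
Qed.

Lemma vge_frobenius_sum_exprpX j :
  vge (1 + c * (p ^ j.+1)%:R) (S j ^+ p - S j.+1).
Proof.
have -> : S j.+1 = \sum_(y <- ys) (y ^+ (p ^ j)) ^+ p.
  by apply: eq_bigr => y _; rewrite -exprM -expnSr.
rewrite expnSr natrM mulrA !big_seq; apply: vge_frobenius_sum => //.
  by rewrite mulr_ge0.
by move=> y /vge_ys hy; exact: vgeX.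
Qed.

Lemma vge_iter_frobenius_step j : c * (p ^ j)%:R <= 1 -> vge 1 (E j) ->
  vge (1 + c * (p ^ j)%:R) (E j.+1).
Proof.
move=> cpj_le1 hE; have cpj_ge0 : 0 <= c * (p ^ j)%:R by rewrite mulr_ge0.
have hS := vge_sum_exprpX j.
have eA : (1 + \sum_(y <- ys) y) ^+ (p ^ j.+1) = ((1 + S j) + E j) ^+ p.
  by rewrite expnSr exprM /frobenius_defect; congr (_ ^+ p); ring.
have -> : E j.+1 = (((1 + S j) + E j) ^+ p - (1 + S j) ^+ p)
    + binom_mid p 1 (S j) 1 + (S j ^+ p - S j.+1).
  by rewrite {1}/frobenius_defect [(1 + S j) ^+ p]exprp_binom_mid // expr1n eA; ring.
have p_ge2 : 2%:R <= p%:R :> rat by rewrite ler_nat prime_gt1.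
apply: vgeD; first apply: vgeD.
- apply: (vge_exprp_perturb p_prime (e := 1)) => //; [|lra|lra].
  by rewrite -[0]addr0; apply: vgeD; [exact: vge1|exact: vge_le hS].
- apply: (vge_binom_mid p_prime (a := 0)) hS _ => //; first exact: vge1.
  by move=> k /andP[k1 _]; rewrite mul0r add0r ler_peMr // ler1n.
- apply: vge_le (vge_frobenius_sum_exprpX j).
  by rewrite lerD2l expnSr natrM mulrA ler_peMr // ler1n prime_gt0.
Qed.

Lemma frobenius_defect0 : E 0 = 0.
Proof.
rewrite /frobenius_defect.
have -> : S 0 = \sum_(y <- ys) y by apply: eq_bigr => y _; rewrite expn0 expr1.
by rewrite expn0 expr1 addrAC addrK subrr.
Qed.

Lemma le_c_expnS j : c * (p ^ j)%:R <= c * (p ^ j.+1)%:R.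
Proof. by rewrite ler_wpM2l // ler_nat leq_pexp2l ?prime_gt0. Qed.

Lemma vge_iter_frobenius j : c * (p ^ j)%:R <= 1 ->
  vge (1 + c * (p ^ j)%:R) (E j.+1).
Proof.
elim: j => [|j ih] cpj_le1; apply: vge_iter_frobenius_step => //.
  by rewrite frobenius_defect0; left.
apply: vge_le (ih (le_trans (le_c_expnS j) cpj_le1)).
by rewrite lerDl mulr_ge0.
Qed.

Lemma vge1_iter_frobenius j : c * (p ^ j)%:R <= 1 -> vge 1 (E j).
Proof.
case: j => [|j] cpj_le1; first by rewrite frobenius_defect0; left.
apply: vge_le (vge_iter_frobenius (le_trans (le_c_expnS j) cpj_le1)).
by rewrite lerDl mulr_ge0.
Qed.

End IteratedFrobenius.

Section LastFrobeniusStep.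
Variables (p : nat) (M : pMN p).
Hypothesis p_prime : prime p.
Local Notation L := (mnL M).

Lemma exp_trunc_tmXp (X : L) :
  exp_trunc_tm (X ^+ p) = \sum_(1 <= k < p) (invtfact M k * X ^+ k) ^+ p.
Proof.
by apply: eq_bigr => k _; rewrite exprMn invtfactXp exprAC.
Qed.

Lemma vge_exprp_1DD (U W E : L) c w B :
    0 <= c -> 0 <= w -> vge c U -> vge w W -> vge 1 E ->
    B <= 2%:R -> B <= 1 + w *+ 2 -> B <= 1 + (c + w) ->
  vge B ((1 + U + W + E) ^+ p - (1 + U) ^+ p - W ^+ p - p%:R * W).
Proof.
move=> c0 w0 hU hW hE B2 B2w Bcw.
have p_ge2 : 2%:R <= p%:R :> rat by rewrite ler_nat prime_gt1.
have h1U : vge 0 (1 + U).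
  by rewrite -[0]addr0; apply: vgeD; [exact: vge1|exact: vge_le hU].
have -> : (1 + U + W + E) ^+ p - (1 + U) ^+ p - W ^+ p - p%:R * W =
    ((1 + U + W + E) ^+ p - (1 + U + W) ^+ p) + binom_mid p (1 + U) W 2
    + p%:R * (((1 + U) ^+ (p - 1) - 1) * W).
  by rewrite [(1 + U + W) ^+ p]exprp_binom_mid2 // -[_ * W *+ p]mulr_natl; ring.
apply: vgeD; first apply: vgeD.
- apply: (vge_exprp_perturb p_prime (e := 1)) => //; last lra.
  by rewrite -[0]addr0; apply: vgeD => //; exact: vge_le hW.
- apply: (vge_le B2w); apply: (vge_binom_mid p_prime (a := 0) (b := w)) => //.
  move=> k /andP[k2 _]; rewrite mul0r add0r -[w *+ 2]mulr_natr.
  by rewrite ler_wpM2l // ler_nat.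
- apply: (vge_le Bcw); apply: vgeM; first exact: vge_p.
  by apply: vgeM => //; exact: vge_expr1D_sub1.
Qed.

(* Of [(1 + U + W + E) ^ p - 1] only [U ^ p], [p X], [p W] and [W ^ p] have valuation
   below [1 + c p]; [U ^ p] and [W ^ p] are then replaced by sums of [p]-th powers. *)
Lemma vge_last_frobenius_step (X E : L) (ws : seq L) (c w : rat) :
    0 <= c -> c * p%:R <= 1 -> c <= w -> c * p%:R <= c + w -> c * p%:R <= w *+ 2 ->
    vge c X -> (forall y, y \in ws -> vge w y) -> vge 1 E ->
  vge (1 + c * p%:R)
    ((1 + exp_trunc_tm X + \sum_(y <- ws) y + E) ^+ p - 1
     - (exp_trunc_tm (X ^+ p) + p%:R * X + \sum_(y <- ws) (p%:R * y + y ^+ p))).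
Proof.
move=> c0 cp1 cw cpcw cp2w hX hws hE.
have w0 : 0 <= w := le_trans c0 cw.
set U := exp_trunc_tm X; set W := \sum_(y <- ws) y.
have hW : vge w W by rewrite /W big_seq; apply: vge_sum.
rewrite big_split /= -mulr_sumr exp_trunc_tmXp -/W.
set W' := \sum_(y <- ws) y ^+ p; set U' := \sum_(1 <= k < p) _.
have -> : (1 + U + W + E) ^+ p - 1 - (U' + p%:R * X + (p%:R * W + W')) =
    ((1 + U + W + E) ^+ p - (1 + U) ^+ p - W ^+ p - p%:R * W) + (W ^+ p - W')
    + ((1 + U) ^+ p - 1 - U ^+ p - p%:R * X) + (U ^+ p - U') by ring.
apply: vgeD; first apply: vgeD; first apply: vgeD.
- apply: (vge_exprp_1DD c0 w0 _ hW hE); [exact: vge_exp_trunc_tm|lra|lra|lra].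
- apply: (@vge_le _ _ (1 + w * p%:R)); first by rewrite lerD2l ler_wpM2r ?ler0n.
  by rewrite /W' /W !big_seq; apply: (vge_frobenius_sum p_prime) => //; exact: hws.
- exact: vge_exp_trunc_tmXp.
- rewrite /U' /U /exp_trunc_tm !big_nat; apply: (vge_frobenius_sum p_prime) => //.
  by move=> k; exact: vge_invtfact_expr.
Qed.

End LastFrobeniusStep.

Section RootOfUnity.
Variables (p : nat) (M : pMN p) (z : mnF M).
Hypotheses (p_prime : prime p) (p_gt2 : (2 < p)%N).
Hypothesis z_prim : (2 * (p - 1))%N.-primitive_root z.
Local Notation L := (mnL M).
Local Notation t := (@tm _ M z).

Lemma p_odd : odd p.
Proof. by case: (even_prime p_prime) p_gt2 => [->|]. Qed.

Lemma z_expr_pred : z ^+ (p - 1) = -1.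
Proof.
have : (z ^+ (p - 1)) ^+ 2 == 1 by rewrite -exprM mulnC prim_expr_order.
rewrite sqrf_eq1 => /orP[/eqP z1|/eqP //]; exfalso.
have := prim_order_dvd z_prim (p - 1); rewrite z1 eqxx => /dvdn_leq.
by rewrite subn_gt0 ltnW // => /(_ isT); lia.
Qed.

Lemma vge0_t : vge 0 t.
Proof.
right; rewrite v_tm //; apply: contra_eq_neq (prim_expr_order z_prim) => ->.
by rewrite expr0n muln_eq0 subn_eq0 leqNgt ltnW //= eq_sym oner_eq0.
Qed.

Lemma t_expnp j : t ^+ (p ^ j) = (-1) ^+ j * t.
Proof.
have t_p : t ^+ p = - t.
  rewrite -tmX -[p in z ^+ p](subnK (ltnW (prime_gt1 p_prime))) exprD.
  by rewrite z_expr_pred tm_mul (tmN1 M p_gt2) expr1 mulN1r.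
elim: j => [|j ih]; first by rewrite expn0 expr1 mul1r.
have sgn_p : (-1 : L) ^+ p = -1 by rewrite -signr_odd p_odd expr1.
by rewrite expnSr exprM ih exprMn t_p exprAC sgn_p exprS mulN1r mulrN mulNr.
Qed.

Lemma monomial_expnp s q j :
  ((-1) ^+ s * t * pw M q) ^+ (p ^ j) = (-1) ^+ (s + j) * t * pw M (q * (p ^ j)%:R).
Proof.
have sgn : (-1 : L) ^+ (p ^ j) = -1 by rewrite -signr_odd oddX p_odd orbT.
by rewrite !exprMn t_expnp pwX exprAC sgn exprD mulrA.
Qed.

Lemma vge_monomial s q : vge q ((-1) ^+ s * t * pw M q).
Proof.
have sgn : vge 0 ((-1 : L) ^+ s) by rewrite -(mul0r s%:R); apply/vgeX/vgeN/vge1.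
by have := vgeM (vgeM sgn vge0_t) (vge_pw M q); rewrite !add0r.
Qed.

End RootOfUnity.

Section Lambda.
Variables (p : nat) (M : pMN p) (z : mnF M) (m i : nat).
Hypotheses (p_prime : prime p) (p_gt2 : (2 < p)%N).
Hypothesis z_prim : (2 * (p - 1))%N.-primitive_root z.
Local Notation L := (mnL M).
Local Notation t := (@tm _ M z).
Local Notation n := m.+2.
Local Notation P := (p%:R : rat).

Definition lam_x : L := (-1) ^+ n * t * pw M (1 / (p ^ (n - 1) * (p - 1))%N%:R).

Definition tail_term l : L :=
  (-1) ^+ n * t * pw M (1 / (p ^ (n - 2) * (p - 1))%N%:R - 1 / (p ^ l)%N%:R).

Definition head_terms : seq L :=
  [seq invtfact M k * lam_x ^+ k | k <- index_iota 1 (minn i (p - 1)).+1].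

Definition tail_terms : seq L :=
  if (i <= p - 1)%N then [::] else [seq tail_term l | l <- index_iota n (i - p + n).+1].

Lemma Lambda_terms : Lambda z n i = 1 + \sum_(y <- head_terms ++ tail_terms) y.
Proof.
rewrite /Lambda /tail_terms big_cat /= big_map.
set D := ((p ^ (n - 1) * (p - 1))%N%:R : rat).
have -> : \sum_(0 <= k < (minn i (p - 1)).+1)
    (-1) ^+ (k * n) * invtfact M k * t ^+ k * pw M (k%:R / D)
  = 1 + \sum_(k <- index_iota 1 (minn i (p - 1)).+1) invtfact M k * lam_x ^+ k.
  rewrite big_ltn // mul0n !expr0 invtfact0 mul0r pw0 !mulr1; congr (1 + _).
  apply: eq_bigr => k _; rewrite /lam_x exprMn [(_ * t) ^+ k]exprMn -exprM mulnC pwX.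
  by rewrite mul1r [_ * k%:R]mulrC -/D !mulrA [invtfact M k * _]mulrC.
by case: ifP => _; rewrite ?big_nil ?addr0 // big_map addrA.
Qed.

Let P_ge3 : 3%:R <= P. Proof. by rewrite ler_nat. Qed.

Let P_neq0 : P != 0. Proof. by rewrite pnatr_eq0 gtn_eqF ?prime_gt0. Qed.

Let P1_neq0 : P - 1 != 0. Proof. by rewrite subr_eq0 pnatr_eq1 gtn_eqF ?prime_gt1. Qed.

Let PX_neq0 k : P ^+ k != 0. Proof. exact: expf_neq0. Qed.

Let natr_pred : ((p - 1)%N%:R : rat) = P - 1.
Proof. by rewrite natrB ?prime_gt0. Qed.

Let natr_D k : ((p ^ k * (p - 1))%N%:R : rat) = P ^+ k * (P - 1).
Proof. by rewrite natrM natrX natr_pred. Qed.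

Definition c_lam : rat := 1 / (p ^ (n - 1) * (p - 1))%N%:R.

Lemma c_lam_expn_m : c_lam * (p ^ m)%:R = 1 / (p * (p - 1))%N%:R.
Proof.
rewrite /c_lam subSS subn0 natr_D natrM natr_pred natrX exprS; field.
by rewrite P_neq0 P1_neq0 PX_neq0.
Qed.

Lemma c_lam_ge0 : 0 <= c_lam.
Proof. by rewrite /c_lam mul1r invr_ge0 ler0n. Qed.

Lemma c_lam_le_tail l : (n <= l)%N ->
  c_lam <= 1 / (p ^ (n - 2) * (p - 1))%N%:R - 1 / (p ^ l)%N%:R.
Proof.
move=> le_n_l; rewrite /c_lam subSS subn0 subn2 /= !natr_D natrX -(subnK le_n_l) exprD.
rewrite -subr_ge0.
have -> : 1 / (P ^+ m * (P - 1)) - 1 / (P ^+ (l - n) * P ^+ m.+2) - 1 / (P ^+ m.+1 * (P - 1))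
    = (P ^+ (l - n).+1 - 1) / (P ^+ (l - n) * P ^+ m.+2).
  by rewrite !exprS; field; rewrite P_neq0 P1_neq0 !PX_neq0.
apply: divr_ge0; last by rewrite mulr_ge0 // exprn_ge0 // ler0n.
by rewrite subr_ge0 exprn_ege1 // ler1n prime_gt0.
Qed.

Lemma vge_lambda_terms y : y \in head_terms ++ tail_terms -> vge c_lam y.
Proof.
have hx : vge c_lam lam_x by exact: vge_monomial.
rewrite mem_cat /head_terms /tail_terms => /orP[/mapP[k]|].
  rewrite mem_index_iota => k_range ->; apply: vge_invtfact_expr => //.
    exact: c_lam_ge0.
  by move: k_range; rewrite ltnS leq_min; lia.
case: ifP => _ //; case/mapP=> l; rewrite mem_index_iota => /andP[le_n_l _] ->.
by apply: vge_le (c_lam_le_tail le_n_l) _; exact: vge_monomial.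
Qed.

Definition tail_monomial s : L := t * pw M (1 / (p - 1)%N%:R - 1 / (p ^ s)%N%:R).

Definition corr_monomial s : L := t * pw M (1 + 1 / (p - 1)%N%:R - 1 / (p ^ s)%N%:R).

Lemma vge_tail_monomial s :
  vge (1 / (p - 1)%N%:R - 1 / (p ^ s)%N%:R) (tail_monomial s).
Proof. by rewrite -[X in vge X]add0r; apply: vgeM; [exact: vge0_t|exact: vge_pw]. Qed.

Let n_m_even : (-1 : L) ^+ (n + m) = 1.
Proof. by rewrite -signr_odd addSn addSn /= addnn odd_double. Qed.

Lemma lam_x_expn_m : lam_x ^+ (p ^ m) = tail_monomial 1.
Proof.
rewrite monomial_expnp // n_m_even -/c_lam mul1r c_lam_expn_m /tail_monomial expn1.
by congr (_ * pw M _); rewrite natrM natr_pred; field; rewrite P_neq0 P1_neq0.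
Qed.

Lemma lam_x_expn_mS : lam_x ^+ (p ^ m.+1) = - (t * pw M (1 / (p - 1)%N%:R)).
Proof.
rewrite monomial_expnp // -/c_lam addnS exprS n_m_even mulr1 mulN1r mulNr expnS natrM.
rewrite mulrCA c_lam_expn_m natrM natr_pred; congr (- (_ * pw M _)).
by field; rewrite P_neq0 P1_neq0.
Qed.

Lemma tail_term_expn_m l : (n <= l)%N -> tail_term l ^+ (p ^ m) = tail_monomial (l - m).
Proof.
move=> le_n_l; rewrite /tail_term monomial_expnp // n_m_even [1 * t]mul1r /tail_monomial.
congr (_ * pw M _).
rewrite subn2 /= !natr_D !natrX natr_pred -{1}(subnK (ltnW (ltnW le_n_l))) exprD.
by field; rewrite P1_neq0 !PX_neq0.
Qed.

Lemma p_mul_tail_monomial s : p%:R * tail_monomial s = corr_monomial s.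
Proof. by rewrite -pw_1 mulrCA -pw_add addrA. Qed.

Lemma tail_monomialS_expp s : tail_monomial s.+1 ^+ p = - corr_monomial s.
Proof.
have := monomial_expnp p_prime p_gt2 z_prim 0
  (1 / (p - 1)%N%:R - 1 / (p ^ s.+1)%N%:R) 1.
rewrite expn1 expr0 [1 * t]mul1r add0n expr1 mulN1r mulNr /tail_monomial => ->.
rewrite /corr_monomial; congr (- (_ * pw M _)); rewrite natr_pred !natrX exprS.
by field; rewrite P_neq0 P1_neq0 PX_neq0.
Qed.

Lemma sum_head_terms_expn j : \sum_(y <- head_terms) y ^+ (p ^ j) =
  \sum_(1 <= k < (minn i (p - 1)).+1) invtfact M k * (lam_x ^+ (p ^ j)) ^+ k.
Proof.
rewrite /head_terms big_map; apply: eq_bigr => k _.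
by rewrite (exprMn _ (invtfact M k)) invtfactXpn exprAC.
Qed.

Lemma mainSum_lam_x k :
  mainSum z k = \sum_(1 <= l < k.+1) invtfact M l * (lam_x ^+ (p ^ m.+1)) ^+ l.
Proof.
apply: eq_bigr => l _; rewrite lam_x_expn_mS [(- (t * _)) ^+ l]exprNn [(t * _) ^+ l]exprMn.
rewrite pwX.
have -> : 1 / (p - 1)%N%:R * l%:R = l%:R / (p - 1)%N%:R :> rat by rewrite mul1r mulrC.
ring.
Qed.

Lemma c_lam_expn_m_le1 : c_lam * (p ^ m)%:R <= 1.
Proof.
have hP := P_ge3.
rewrite c_lam_expn_m natrM natr_pred ler_pdivrMr ?mul1r; first nra.
by apply: mulr_gt0; lra.
Qed.

Lemma Lambda_expn_small : (i < p - 1)%N ->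
  bigOp (Lambda z n i ^+ (p ^ (n - 1)) - 1) (mainSum z i) (1 + 1 / (p * (p - 1))%N%:R).
Proof.
move=> lt_i_p1.
have := vge_iter_frobenius p_prime c_lam_ge0 vge_lambda_terms c_lam_expn_m_le1.
rewrite c_lam_expn_m /frobenius_defect -Lambda_terms /tail_terms ifT ?cats0; last lia.
by rewrite sum_head_terms_expn mainSum_lam_x (minn_idPl _) ?subSS ?subn0 //; lia.
Qed.

Lemma tail_terms_telescope : (p - 1 <= i)%N ->
  p%:R * tail_monomial 1 + \sum_(y <- tail_terms) (p%:R * y ^+ (p ^ m) + (y ^+ (p ^ m)) ^+ p)
  = corr_monomial (i.+2 - p).
Proof.
move=> le_p1_i; rewrite p_mul_tail_monomial /tail_terms; case: ifP => [le_i_p1|lt_p1_i].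
  by rewrite big_nil addr0; congr corr_monomial; lia.
rewrite big_map (telescope_sumr_eq (fun l => corr_monomial (l - m.+1))).
- have -> : (m.+2 - m.+1 = 1)%N by rewrite subSS subSnn.
  by rewrite addrC subrK; congr corr_monomial; lia.
- lia.
- move=> l /andP[le_n_l _]; rewrite tail_term_expn_m // p_mul_tail_monomial subSS.
  have -> : (l - m = (l - m.+1).+1)%N by lia.
  by rewrite tail_monomialS_expp.
Qed.

Let c1 : rat := 1 / (p * (p - 1))%N%:R.
Let w1 : rat := 1 / (p - 1)%N%:R - 1 / (p ^ 2)%N%:R.

Let c1_mulp : c1 * P = 1 / (P - 1).
Proof. by rewrite /c1 natrM natr_pred; field; rewrite P_neq0 P1_neq0. Qed.

(* With [u = 1/(p-1)] and [v = 1/p] one has [u - v = u v], which makes all bounds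
   polynomial in [u] and [v]. *)
Let c1_w1_bounds :
  [/\ 0 <= c1, c1 * P <= 1, c1 <= w1, c1 * P <= c1 + w1 & c1 * P <= w1 *+ 2].
Proof.
have hP := P_ge3; have P1_gt0 : 0 < P - 1 by lra.
rewrite c1_mulp /w1 /c1 natrM natr_pred natrX.
have e1 : 1 / (P * (P - 1)) = 1 / (P - 1) * (1 / P) by field; rewrite P_neq0 P1_neq0.
have e2 : 1 / P ^+ 2 = 1 / P * (1 / P) by rewrite expr2; field.
have huv : 1 / (P - 1) - 1 / P = 1 / (P - 1) * (1 / P) by field; rewrite P_neq0 P1_neq0.
have u_gt0 : 0 < 1 / (P - 1) by rewrite divr_gt0.
have v_gt0 : 0 < 1 / P by rewrite divr_gt0 //; lra.
have v_le : 1 / P * 3%:R <= 1 by rewrite mul1r ler_pdivrMl ?mulr1; lra.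
rewrite e1 e2; set u := 1 / (P - 1) in huv u_gt0 *; set v := 1 / P in huv v_gt0 v_le *.
clearbody u v; split; nra.
Qed.

Lemma vge_tail_terms_expn_m y :
  y \in [seq y ^+ (p ^ m) | y <- tail_terms] -> vge w1 y.
Proof.
rewrite /tail_terms; case: ifP => _ //; rewrite -map_comp.
case/mapP=> l; rewrite mem_index_iota => /andP[le_n_l _] -> /=.
rewrite tail_term_expn_m //; apply: vge_le (vge_tail_monomial _).
rewrite lerD2l lerN2 !natrX !mul1r lef_pV2 ?posrE ?exprn_gt0 ?ltr0n ?prime_gt0 //.
by rewrite ler_eXn2l ?ltr1n ?(prime_gt1 p_prime) //; lia.
Qed.

Lemma Lambda_expn_large : (p - 1 <= i)%N ->
  bigOp (Lambda z n i ^+ (p ^ (n - 1)) - 1)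
        (mainSum z (p - 1) + corr_monomial (i.+2 - p)) (1 + 1 / (p - 1)%N%:R).
Proof.
move=> le_p1_i; have [c1_ge0 c1p_le1 c1_le_w1 c1p_le_c1w1 c1p_le_2w1] := c1_w1_bounds.
set X := lam_x ^+ (p ^ m); set ws := [seq y ^+ (p ^ m) | y <- tail_terms].
set E := frobenius_defect (head_terms ++ tail_terms) m.
have hX : vge c1 X.
  have -> : c1 = 1 / (p - 1)%N%:R - 1 / (p ^ 1)%N%:R.
    by rewrite /c1 natrM natr_pred expn1; field; rewrite P_neq0 P1_neq0.
  by rewrite /X lam_x_expn_m; exact: vge_tail_monomial.
have hE : vge 1 E.
  exact: (vge1_iter_frobenius p_prime c_lam_ge0 vge_lambda_terms c_lam_expn_m_le1).
have eL : Lambda z n i ^+ (p ^ (n - 1)) = (1 + exp_trunc_tm X + \sum_(y <- ws) y + E) ^+ p.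
  rewrite subSS subn0 expnSr exprM; congr (_ ^+ p).
  rewrite /E /frobenius_defect -Lambda_terms big_cat /= sum_head_terms_expn big_map.
  rewrite (minn_idPr _) // subn1 prednK ?prime_gt0 // /exp_trunc_tm; ring.
have e2 : exp_trunc_tm (X ^+ p) + p%:R * X + \sum_(y <- ws) (p%:R * y + y ^+ p) =
    mainSum z (p - 1) + corr_monomial (i.+2 - p).
  rewrite -addrA big_map {2}/X lam_x_expn_m tail_terms_telescope //; congr (_ + _).
  by rewrite mainSum_lam_x /X -exprM -expnSr subn1 prednK ?prime_gt0.
have := vge_last_frobenius_step p_prime c1_ge0 c1p_le1 c1_le_w1 c1p_le_c1w1 c1p_le_2w1
  hX vge_tail_terms_expn_m hE.
by rewrite /bigOp eL -e2 c1_mulp natr_pred.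
Qed.

End Lambda.

Theorem proposition3p18 (p : nat) (M : pMN p) (z : mnF M) (n : nat) :
  prime p -> (3 <= p)%N -> (2 * (p - 1))%N.-primitive_root z -> (2 <= n)%N ->
  (forall i : nat, (1 <= i)%N -> (i < p - 1)%N ->
     bigOp (Lambda z n i ^+ (p ^ (n - 1)) - 1) (mainSum z i)
           (1 + 1 / ((p * (p - 1))%N%:R))) /\
  (forall i : nat, (p - 1 <= i)%N ->
     bigOp (Lambda z n i ^+ (p ^ (n - 1)) - 1)
           (mainSum z (p - 1)
            + @tm _ M z * @pw _ M (1 + 1 / ((p - 1)%N%:R) - 1 / ((p ^ (i.+2 - p))%N%:R)))
           (1 + 1 / ((p - 1)%N%:R))).
Proof.
move=> p_prime p_gt2 z_prim; case: n => [|[|m]] // _.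
split=> [i _ lt_i_p1|i le_p1_i].
- exact: Lambda_expn_small.
- exact: Lambda_expn_large.
Qed.
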